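(* Fix parameters $m_1,m_2,\alpha>0$. For every $(N_1^a,N_1^A,N_2^a,N_2^A)\in(0,\infty)^4$, all eigenvalues of the matrix $J_{S_L}$ have strictly negative real part.
   Context: For $(N_1^a,N_1^A,N_2^a,N_2^A)\in(0,\infty)^4$ set $p_i=\frac{N_i^A}{N_i^A+N_i^a}$, $q_i=1-p_i=\frac{N_i^a}{N_i^A+N_i^a}$ for $i=1,2$, and $R^A=\frac{\alpha m_2N_2^A}{N_1^A}$, $S^A=\frac{m_1N_1^A}{\alpha N_2^A}$, $R^a=\frac{\alpha m_2N_2^a}{N_1^a}$, $S^a=\frac{m_1N_1^a}{\alpha N_2^a}$. The $3\times3$ matrix $J_{S_L}$ is $$J_{S_L}=\begin{pmatrix}-\frac12 & \frac12(R^A-S^A) & -\frac12(R^a-S^a)\\[2pt] \frac{q_1-q_2}{2} & -(R^A+S^A)-\frac{q_1+q_2}{4} & \frac{q_1+q_2}{4}\\[2pt] \frac{p_2-p_1}{2} & \frac{p_1+p_2}{4} & -(R^a+S^a)-\frac{p_1+p_2}{4}\end{pmatrix}.$$ *)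

From HB Require Import structures.
From mathcomp Require Import all_boot all_order all_algebra.
From mathcomp Require Import complex.
Set Implicit Arguments. Unset Strict Implicit. Unset Printing Implicit Defensive.
Import Order.TTheory GRing.Theory Num.Theory.
Local Open Scope ring_scope.

Definition pfreq {R : rcfType} (Na NA : R) : R := NA / (NA + Na).
Definition qfreq {R : rcfType} (Na NA : R) : R := Na / (NA + Na).

Definition J_SL {R : rcfType} (m1 m2 alpha N1a N1A N2a N2A : R) : 'M[R]_3 :=
  let p1 := pfreq N1a N1A in let p2 := pfreq N2a N2A in
  let q1 := qfreq N1a N1A in let q2 := qfreq N2a N2A in
  let RA := alpha * m2 * N2A / N1A in
  let SA := m1 * N1A / (alpha * N2A) in
  let Ra := alpha * m2 * N2a / N1a in
  let Sa := m1 * N1a / (alpha * N2a) in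
  let rows : seq (seq R) :=
    [:: [:: - (1/2); (1/2) * (RA - SA); - (1/2) * (Ra - Sa)];
        [:: (q1 - q2) / 2; - (RA + SA) - (q1 + q2) / 4; (q1 + q2) / 4];
        [:: (p2 - p1) / 2; (p1 + p2) / 4; - (Ra + Sa) - (p1 + p2) / 4]] in
  \matrix_(i < 3, j < 3) nth 0 (nth [::] rows i) j.

From HB Require Import structures.
From mathcomp Require Import all_boot all_order all_algebra.
From mathcomp Require Import complex ring lra.
Import Order.TTheory GRing.Theory Num.Theory.
Local Open Scope ring_scope.

(* The eigenvalues of a real 3x3 matrix A are the roots of
   z^3 + c2 z^2 + c1 z + c0, where c2 = -tr A, c1 is the sum of the principal
   2x2 minors and c0 = -det A; by the Routh-Hurwitz criterion they all have
   negative real part once c2, c1 >= 0 and 0 < c0 < c2 c1.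
   For J_SL put u = R^A + S^A, v = R^a + S^a and d = q1 - q2 = p2 - p1.
   Then c2 = 1 + u + v, and the only terms of c1 and c0 without a sign carry a
   factor d.  As |d| < 1 and |d| <= min(q1 + q2, p1 + p2), they are dominated
   by the positive terms, which gives 0 < c0 < c1 <= c2 c1. *)

Definition mx33_minor_sum {R : pzRingType} (A : 'M[R]_3) : R :=
  A 0 0 * A 1 1 - A 0 1 * A 1 0 + A 0 0 * A 2 2 - A 0 2 * A 2 0
  + A 1 1 * A 2 2 - A 1 2 * A 2 1.

Section Matrix33.
Variable R : comNzRingType.
Implicit Type A : 'M[R]_3.

Let inord_mx33 A : A = \matrix_(i < 3, j < 3) A (inord i) (inord j).
Proof. by apply/matrixP => i j; rewrite mxE !inord_val. Qed.

Let ord3_inord :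
  [/\ (0 : 'I_3) = inord 0, (1 : 'I_3) = inord 1 & (2 : 'I_3) = inord 2].
Proof. by split; apply: val_inj; rewrite /= inordK. Qed.

Lemma mxtrace33 A : \tr A = A 0 0 + A 1 1 + A 2 2.
Proof.
rewrite [A in LHS]inord_mx33 /mxtrace !big_ord_recl big_ord0 !mxE /= /bump /=.
rewrite !(addn0, add0n) -[(1 + 1)%N]/2%N.
by have [-> -> ->] := ord3_inord; rewrite addr0 addrA.
Qed.

Lemma det_mx33 A :
  \det A = A 0 0 * (A 1 1 * A 2 2 - A 1 2 * A 2 1)
         - A 0 1 * (A 1 0 * A 2 2 - A 1 2 * A 2 0)
         + A 0 2 * (A 1 0 * A 2 1 - A 1 1 * A 2 0).
Proof.
rewrite [A in LHS]inord_mx33 (expand_det_row _ 0) !big_ord_recl big_ord0.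
rewrite /cofactor !(expand_det_row _ 0) !big_ord_recl !big_ord0 /cofactor.
rewrite !det_mx11 !mxE /= /bump /= !expr0 !expr1 sqrrN expr1n.
rewrite !(addn0, add0n) -[(1 + 1)%N]/2%N.
by have [-> -> ->] := ord3_inord; ring.
Qed.

End Matrix33.

Lemma char_poly33 (R : comNzRingType) (A : 'M[R]_3) :
  char_poly A = 'X^3 - (\tr A)%:P * 'X^2 + (mx33_minor_sum A)%:P * 'X - (\det A)%:P.
Proof.
rewrite /char_poly [LHS]det_mx33 mxtrace33 det_mx33 /mx33_minor_sum !mxE !eqxx /=.
ring.
Qed.

Lemma mx33_minor_sum_map (R S : comNzRingType) (f : {rmorphism R -> S})
    (A : 'M[R]_3) :
  mx33_minor_sum (map_mx f A) = f (mx33_minor_sum A).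
Proof. by rewrite /mx33_minor_sum !mxE !(rmorphB, rmorphD, rmorphM). Qed.

Lemma eigenvalue33 (F : fieldType) (A : 'M[F]_3) (z : F) :
  eigenvalue A z -> z ^+ 3 - \tr A * z ^+ 2 + mx33_minor_sum A * z - \det A = 0.
Proof. by rewrite eigenvalue_root_char char_poly33 => /rootP; rewrite !hornerE. Qed.

Lemma hurwitz_cubic_root_Re_lt0 (R : rcfType) (c2 c1 c0 : R) (z : R[i]) :
  0 <= c2 -> 0 <= c1 -> 0 < c0 -> c0 < c2 * c1 ->
  z ^+ 3 + c2%:C%C * z ^+ 2 + c1%:C%C * z + c0%:C%C = 0 -> complex.Re z < 0.
Proof.
move=> c2_ge0 c1_ge0 c0_gt0 c0_lt; rewrite !exprS expr0 !mulr1.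
case: z => x y root_xy.
have /= re0 := congr1 (@complex.Re R) root_xy.
have /= im0 := congr1 (@complex.Im R) root_xy.
rewrite ltNge; apply/negP => x_ge0.
have x2_ge0 := mulr_ge0 x_ge0 x_ge0.
have := mulr_ge0 x2_ge0 x_ge0; have := mulr_ge0 c2_ge0 x2_ge0.
have := mulr_ge0 c1_ge0 x_ge0; have := mulr_ge0 (mulr_ge0 c2_ge0 c2_ge0) x_ge0.
have [y0|y_neq0] := eqVneq y 0.
  by move: re0; rewrite y0 !(mulr0, mul0r, subr0, addr0); lra.
(* The imaginary part determines y^2; substituted into the real part it leaves
   c0 - c2 c1 minus a polynomial in x with nonnegative coefficients. *)
have y2E : y * y = 3 * (x * x) + 2 * c2 * x + c1.
  apply/eqP; rewrite eq_sym -subr_eq0; apply/eqP/(mulfI y_neq0).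
  by rewrite mulr0 -[RHS]im0; ring.
have : x * (x * x - 3 * (y * y)) + c2 * (x * x - y * y) + c1 * x + c0 = 0.
  by rewrite -[RHS]re0; ring.
rewrite y2E; lra.
Qed.

Lemma eigenvalue_complex_mx33_Re_lt0 (R : rcfType) (A : 'M[R]_3) (z : R[i]) :
  0 <= - \tr A -> 0 <= mx33_minor_sum A -> 0 < - \det A ->
  - \det A < - \tr A * mx33_minor_sum A ->
  eigenvalue (map_mx (real_complex R) A) z -> complex.Re z < 0.
Proof.
move=> tr_le0 minor_ge0 det_lt0 hurwitz /eigenvalue33.
rewrite trace_map_mx det_map_mx mx33_minor_sum_map => char_z.
apply: (@hurwitz_cubic_root_Re_lt0 R _ _ _ z tr_le0 minor_ge0 det_lt0 hurwitz).
by rewrite !rmorphN -[RHS]char_z; ring.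
Qed.

Lemma pfreqE (R : rcfType) (Na NA : R) :
  NA + Na != 0 -> pfreq Na NA = 1 - qfreq Na NA.
Proof. by move=> N_neq0; rewrite /pfreq /qfreq -(divff N_neq0) -mulrBl addrK. Qed.

Lemma qfreq_gt0 (R : rcfType) (Na NA : R) : 0 < Na -> 0 < NA -> 0 < qfreq Na NA.
Proof. by move=> Na_gt0 NA_gt0; rewrite divr_gt0 ?addr_gt0. Qed.

Lemma qfreq_lt1 (R : rcfType) (Na NA : R) : 0 < Na -> 0 < NA -> qfreq Na NA < 1.
Proof.
by move=> Na_gt0 NA_gt0; rewrite ltr_pdivrMr ?addr_gt0 // mul1r ltrDr.
Qed.

Lemma norm_mul_lt (R : realDomainType) (a b c : R) :
  `|a| < 1 -> `|b| <= c -> 0 < c -> `|a * b| < c.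
Proof. by move=> a_lt1 b_le c_gt0; rewrite normrM; have := normr_ge0 a; nra. Qed.

Section JSL.
Context {R : rcfType} {m1 m2 alpha N1a N1A N2a N2A : R}.
Hypotheses (m1_gt0 : 0 < m1) (m2_gt0 : 0 < m2) (alpha_gt0 : 0 < alpha)
  (N1a_gt0 : 0 < N1a) (N1A_gt0 : 0 < N1A) (N2a_gt0 : 0 < N2a) (N2A_gt0 : 0 < N2A).

Let J := J_SL m1 m2 alpha N1a N1A N2a N2A.
Let RA := alpha * m2 * N2A / N1A.
Let SA := m1 * N1A / (alpha * N2A).
Let Ra := alpha * m2 * N2a / N1a.
Let Sa := m1 * N1a / (alpha * N2a).
Let q1 := qfreq N1a N1A.
Let q2 := qfreq N2a N2A.
Let u := RA + SA.
Let v := Ra + Sa.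
Let x := RA - SA.
Let y := Ra - Sa.
Let s := q1 + q2.
Let d := q1 - q2.

(* [J_SL] is indexed by [nat_of_ord i]; on the numerals of ['I_3] this only
   reduces through [modn], so the indices are converted explicitly. *)
Let ord3_natE := ((erefl : nat_of_ord (1 : 'I_3) = 1%N),
                  (erefl : nat_of_ord (2 : 'I_3) = 2%N)).

Let p1E : pfreq N1a N1A = 1 - q1.
Proof. by rewrite pfreqE // lt0r_neq0 // addr_gt0. Qed.

Let p2E : pfreq N2a N2A = 1 - q2.
Proof. by rewrite pfreqE // lt0r_neq0 // addr_gt0. Qed.

Lemma J_SL_trace : \tr J = - (1 + u + v).
Proof.
rewrite /J /J_SL /= mxtrace33 !mxE !ord3_natE /= p1E p2E.
rewrite -/RA -/SA -/Ra -/Sa -/q1 -/q2 /u /v.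
by field.
Qed.

Lemma J_SL_minor_sum :
  mx33_minor_sum J = 1/4 + (u + v) / 2 + u * v + (u * (2 - s) + v * s) / 4
                     + d * (y - x) / 4.
Proof.
rewrite /J /J_SL /= /mx33_minor_sum !mxE !ord3_natE /= p1E p2E.
rewrite -/RA -/SA -/Ra -/Sa -/q1 -/q2 /u /v /x /y /s /d.
by field.
Qed.

Lemma J_SL_det :
  - \det J = (u * v + (u * (2 - s) + v * s) / 4) / 2
             - d * (x * (v + 1/2) - y * (u + 1/2)) / 4.
Proof.
rewrite /J /J_SL /= det_mx33 !mxE !ord3_natE /= p1E p2E.
rewrite -/RA -/SA -/Ra -/Sa -/q1 -/q2 /u /v /x /y /s /d.
by field.
Qed.

Let RA_gt0 : 0 < RA. Proof. by rewrite /RA divr_gt0 ?mulr_gt0. Qed.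
Let SA_gt0 : 0 < SA. Proof. by rewrite /SA divr_gt0 ?mulr_gt0. Qed.
Let Ra_gt0 : 0 < Ra. Proof. by rewrite /Ra divr_gt0 ?mulr_gt0. Qed.
Let Sa_gt0 : 0 < Sa. Proof. by rewrite /Sa divr_gt0 ?mulr_gt0. Qed.

Let u_gt0 : 0 < u. Proof. exact: addr_gt0. Qed.
Let v_gt0 : 0 < v. Proof. exact: addr_gt0. Qed.

Let x_le : `|x| <= u.
Proof. by apply: le_trans (ler_normB _ _) _; rewrite !gtr0_norm. Qed.

Let y_le : `|y| <= v.
Proof. by apply: le_trans (ler_normB _ _) _; rewrite !gtr0_norm. Qed.

Let q_bounds : [/\ 0 < q1, q1 < 1, 0 < q2 & q2 < 1].
Proof. by split; rewrite ?qfreq_gt0 ?qfreq_lt1. Qed.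

Let d_lt1 : `|d| < 1.
Proof. by case: q_bounds; rewrite ltr_norml /d; lra. Qed.

Let d_le_s : `|d| <= s.
Proof. by case: q_bounds; rewrite ler_norml /d /s; lra. Qed.

Let d_le_2s : `|d| <= 2 - s.
Proof. by case: q_bounds; rewrite ler_norml /d /s; lra. Qed.

Let dx_bounds : [/\ `|d * x| < u & `|d * x| <= (2 - s) * u].
Proof. by split; rewrite ?norm_mul_lt // normrM ler_pM ?normr_ge0. Qed.

Let dy_bounds : [/\ `|d * y| < v & `|d * y| <= s * v].
Proof. by split; rewrite ?norm_mul_lt // normrM ler_pM ?normr_ge0. Qed.

Lemma J_SL_hurwitz_minors : 0 < - \det J /\ - \det J < mx33_minor_sum J.
Proof.
have [/ltr_normlP[dx_gtN dx_lt] /ler_normlP[dx_geN dx_le]] := dx_bounds.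
have [/ltr_normlP[dy_gtN dy_lt] /ler_normlP[dy_geN dy_le]] := dy_bounds.
have s_ge0 : 0 <= s by apply: le_trans d_le_s.
have s_le2 : 0 <= 2 - s by apply: le_trans d_le_2s.
have := mulr_ge0 (ltW u_gt0) s_le2; have := mulr_ge0 (ltW v_gt0) s_ge0.
have [] : [/\ 0 < (u - d * x) * v, 0 < (u + d * x) * v,
            0 < (v - d * y) * u & 0 < (v + d * y) * u].
  by split; apply: mulr_gt0; rewrite ?u_gt0 ?v_gt0 //; lra.
rewrite J_SL_det J_SL_minor_sum; split; lra.
Qed.

Lemma J_SL_hurwitz :
  [/\ 0 <= - \tr J, 0 <= mx33_minor_sum J, 0 < - \det J
     & - \det J < - \tr J * mx33_minor_sum J].
Proof.
have [det_gt0 det_lt] := J_SL_hurwitz_minors.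
have minor_ge0 := ltW (lt_trans det_gt0 det_lt).
have tr_ge1 : 1 <= - \tr J.
  by rewrite J_SL_trace opprK; have := u_gt0; have := v_gt0; lra.
split=> //; first exact: le_trans tr_ge1.
exact: lt_le_trans det_lt (ler_peMl minor_ge0 tr_ge1).
Qed.

End JSL.

Theorem mainTheorem6 (R : rcfType) (m1 m2 alpha : R)
  (hm1 : 0 < m1) (hm2 : 0 < m2) (halpha : 0 < alpha)
  (N1a N1A N2a N2A : R)
  (h1a : 0 < N1a) (h1A : 0 < N1A) (h2a : 0 < N2a) (h2A : 0 < N2A) :
  forall z : R[i],
    eigenvalue (map_mx (fun x : R => (x%:C)%C) (J_SL m1 m2 alpha N1a N1A N2a N2A)) z ->
    complex.Re z < 0.
Proof.
move=> z; have [] := J_SL_hurwitz hm1 hm2 halpha h1a h1A h2a h2A.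
exact: eigenvalue_complex_mx33_Re_lt0.
Qed.
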